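(* Consider the optimistic planning procedure with budget $N$. (i) If the procedure stops at a step $n<N$ because the selected node $i_n$ has depth $d$, then $v^*-v(i_n)=0$. (ii) Otherwise, if there exist $\lambda\in(1/K,1]$ and an integer $1\le d_0\le d$ such that $p_l((d-l)\Delta)\le\lambda^l$ for all $d_0\le l\le d$, then for $N>n_0:=\frac{K^{d_0+1}-1}{K-1}$ the output node $i_N$ satisfies $$v^*-v(i_N)\le\Big(d-\frac{\log(N-n_0)}{\log(\lambda K)}-\frac{\log(\lambda K-1)}{\log(\lambda K)}+1\Big)\Delta.$$
   Context: Fix $K\ge2$ arms, $\mathcal Z=\{0,\dots,z_{\max}\}$, a depth $d\ge1$, a root state $\mathbf z\in\mathcal Z^K$, and real numbers $\tilde f_j(z)$ for all arms $j$ and $z\in\mathcal Z$. The tree: a node of depth $l$ is a sequence of $l$ arms; its children append one arm. Each node $i$ carries a state $\mathbf z(i)\in\mathcal Z^K$ obtained from the root by the rule: playing arm $j$ from state $\mathbf z$ gives reward $\tilde f_j(z_j)$ and new state with $z_j\mapsto0$ and $z_{j'}\mapsto\min\{z_{\max},z_{j'}+1\}$ for $j'\ne j$. For a node $i$ of depth $l(i)$: $u(i)$ is the sum of rewards along the path from the root to $i$; $v(i)=u(i)+$ the maximum over continuations of $i$ to depth $d$ of the sum of rewards of the remaining $d-l(i)$ steps; $v^*=\max\{v(i): i\text{ of depth }d\}$. For $1\le l\le d$, $g_j(z,l)=\max\{\tilde f_j(z),\tilde f_j(\min(z+1,z_{\max})),\dots,\tilde f_j(\min(z+l,z_{\max})),\tilde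 f_j(0),\dots,\tilde f_j(\min(l,z_{\max}))\}$; $\Psi(\mathbf z,m)=m\max_jg_j(z_j,m)$ for $m\ge1$ and $\Psi(\mathbf z,0)=0$; $b(i)=u(i)+\Psi(\mathbf z(i),d-l(i))$. Procedure: set $\mathcal T_0=\emptyset$, $\mathcal S_0=\{\text{root}\}$. At step $n=0,1,\dots,N-1$ select $i_n\in\arg\max_{i\in\mathcal S_n}b(i)$; if $i_n$ has depth $d$, stop and output $i_n$; otherwise move $i_n$ from $\mathcal S_n$ to $\mathcal T_{n+1}=\mathcal T_n\cup\{i_n\}$ and add its $K$ children, giving $\mathcal S_{n+1}$. If not stopped after $N$ expansions, let $d_N$ be the maximal depth of nodes in $\mathcal T_N$ and output $i_N$, a node of depth $d_N$ in $\mathcal T_N$ with largest $b$. Let $\Delta=\max_{j,z}\tilde f_j(z)-\min\{\min_{j,z}\tilde f_j(z),0\}$. A node $i$ is $\epsilon$-optimal if $v^*-v(i)\le\epsilon$; $p_l(\epsilon)$ is the proportion of the $K^l$ nodes of depth $l$ that are $\epsilon$-optimal. *)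

From Stdlib Require Import Reals List Arith.
Import ListNotations.
Open Scope R_scope.

(* A node of the tree = the sequence of arms played from the root,
   listed in order (first element = first arm played). Arms are 0..K-1. *)
Definition node := list nat.

(* A state is a map arm -> Z-value (only arms 0..K-1 matter). *)
Definition next_state (zmax : nat) (z : nat -> nat) (j : nat) : nat -> nat :=
  fun j' => if Nat.eqb j' j then 0%nat else Nat.min zmax (S (z j')).

Definition state (zmax : nat) (z : nat -> nat) (i : node) : nat -> nat :=
  fold_left (next_state zmax) i z.

Fixpoint path_reward (f : nat -> nat -> R) (zmax : nat) (z : nat -> nat) (c : node) : R :=
  match c with
  | [] => 0
  | j :: t => f j (z j) + path_reward f zmax (next_state zmax z j) t
  end.

Definition u (f : nat -> nat -> R) (zmax : nat) (z : nat -> nat) (i : node) : R :=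
  path_reward f zmax z i.

Fixpoint all_seqs (K m : nat) : list node :=
  match m with
  | O => [[]]
  | S m' => flat_map (fun j => map (cons j) (all_seqs K m')) (seq 0 K)
  end.

Definition Rmax_list (l : list R) : R :=
  match l with [] => 0 | x :: t => fold_right Rmax x t end.
Definition Rmin_list (l : list R) : R :=
  match l with [] => 0 | x :: t => fold_right Rmin x t end.

Definition v (K zmax d : nat) (f : nat -> nat -> R) (z : nat -> nat) (i : node) : R :=
  u f zmax z i +
  Rmax_list (map (fun c => path_reward f zmax (state zmax z i) c)
                 (all_seqs K (d - length i))).

Definition vstar (K zmax d : nat) (f : nat -> nat -> R) (z : nat -> nat) : R :=
  Rmax_list (map (v K zmax d f z) (all_seqs K d)).

Definition g (f : nat -> nat -> R) (zmax j zj l : nat) : R :=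
  Rmax_list (map (fun k => f j (Nat.min (zj + k) zmax)) (seq 0 (S l)) ++
             map (fun k => f j (Nat.min k zmax)) (seq 0 (S l))).

Definition Psi (K : nat) (f : nat -> nat -> R) (zmax : nat) (zs : nat -> nat) (m : nat) : R :=
  match m with
  | O => 0
  | _ => INR m * Rmax_list (map (fun j => g f zmax j (zs j) m) (seq 0 K))
  end.

Definition b (K zmax d : nat) (f : nat -> nat -> R) (z : nat -> nat) (i : node) : R :=
  u f zmax z i + Psi K f zmax (state zmax z i) (d - length i).

Definition all_values (K zmax : nat) (f : nat -> nat -> R) : list R :=
  flat_map (fun j => map (f j) (seq 0 (S zmax))) (seq 0 K).

Definition Delta_f (K zmax : nat) (f : nat -> nat -> R) : R :=
  Rmax_list (all_values K zmax f) - Rmin (Rmin_list (all_values K zmax f)) 0.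

(* p_l(eps): proportion of eps-optimal nodes among the K^l nodes of depth l *)
Definition eps_optimal (K zmax d : nat) (f : nat -> nat -> R) (z : nat -> nat)
  (eps : R) (i : node) : Prop :=
  vstar K zmax d f z - v K zmax d f z i <= eps.

Definition prop_opt (K zmax d : nat) (f : nat -> nat -> R) (z : nat -> nat) (l : nat) (eps : R) : R :=
  INR (length (filter (fun i => if Rle_dec (vstar K zmax d f z - v K zmax d f z i) eps
                                then true else false) (all_seqs K l)))
  / INR (K ^ l).

Definition node_eqb (i j : node) : bool :=
  if list_eq_dec Nat.eq_dec i j then true else false.

Definition children (K : nat) (i : node) : list node :=
  map (fun j => i ++ [j]) (seq 0 K).

Fixpoint Sset (K : nat) (sel : nat -> node) (n : nat) : list node :=
  match n with
  | O => [[]]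
  | S n' => filter (fun j => negb (node_eqb j (sel n'))) (Sset K sel n')
            ++ children K (sel n')
  end.

Definition Tset (sel : nat -> node) (n : nat) : list node := map sel (seq 0 n).

Definition selects_argmax (K zmax d : nat) (f : nat -> nat -> R) (z : nat -> nat)
  (sel : nat -> node) (n : nat) : Prop :=
  In (sel n) (Sset K sel n) /\
  forall j, In j (Sset K sel n) -> b K zmax d f z j <= b K zmax d f z (sel n).

Definition dN (sel : nat -> node) (N : nat) : nat :=
  fold_right Nat.max 0%nat (map (fun k => length (sel k)) (seq 0 N)).

(* Optimism: b(i) bounds the reward u of every depth-d node below i, and every
   depth-d path passes through the current frontier S_n, so the selected node
   satisfies v* <= b(i_n).  A node of depth d has b = u = v, which gives (i).
   Every expanded node i therefore satisfies v* - v(i) <= b(i) - v(i)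
   <= (d - l(i)) Delta, i.e. it is (d - l(i)) Delta-optimal.  The N expanded
   nodes are distinct, so at most K^l of them have depth l <= d0 and at most
   (lambda K)^l have depth l >= d0; hence N - n0 <= sum_(l <= d_N) (lambda K)^l,
   which inverts to the stated lower bound on d_N, and the output node, of
   depth d_N, is (d - d_N) Delta-optimal. *)
From Stdlib Require Import Reals List Arith Lia Lra.
Import ListNotations.
Open Scope R_scope.

Lemma Rmax_list_ge l x : In x l -> x <= Rmax_list l.
Proof.
  destruct l as [|a t]; [intros []|]; simpl.
  induction t as [|y t IH]; simpl; intros [H|H].
  - subst; lra.
  - destruct H.
  - subst; apply Rle_trans with (fold_right Rmax x t); [apply IH; left|apply Rmax_r]; auto.
  - destruct H as [<-|H]; [apply Rmax_l|].
    apply Rle_trans with (fold_right Rmax a t); [apply IH; right|apply Rmax_r]; auto.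
Qed.

Lemma Rmax_list_le l M : l <> [] -> (forall x, In x l -> x <= M) -> Rmax_list l <= M.
Proof.
  destruct l as [|a t]; [tauto|]; intros _ H; simpl.
  induction t as [|y t IH]; simpl.
  - apply H; simpl; auto.
  - apply Rmax_lub; [apply H; simpl; auto|].
    apply IH; intros x Hx; apply H; simpl in *; tauto.
Qed.

Lemma Rmax_list_in l : l <> [] -> In (Rmax_list l) l.
Proof.
  destruct l as [|a t]; [tauto|]; intros _; simpl.
  induction t as [|y t IH]; simpl; auto.
  destruct (Rle_dec y (fold_right Rmax a t)).
  - rewrite Rmax_right by auto; simpl in *; tauto.
  - rewrite Rmax_left by lra; simpl; auto.
Qed.

Lemma Rmin_list_le l x : In x l -> Rmin_list l <= x.
Proof.
  destruct l as [|a t]; [intros []|]; simpl.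
  induction t as [|y t IH]; simpl; intros [H|H].
  - subst; lra.
  - destruct H.
  - subst; apply Rle_trans with (fold_right Rmin x t); [apply Rmin_r|apply IH; left]; auto.
  - destruct H as [<-|H]; [apply Rmin_l|].
    apply Rle_trans with (fold_right Rmin a t); [apply Rmin_r|apply IH; right]; auto.
Qed.

Lemma in_all_seqs K m w :
  In w (all_seqs K m) <-> length w = m /\ (forall j, In j w -> (j < K)%nat).
Proof.
  revert w; induction m as [|m IH]; intros w; simpl.
  - split.
    + intros [<-|[]]; simpl; tauto.
    + intros [H _]; destruct w; [auto|discriminate].
  - rewrite in_flat_map; split.
    + intros [j [Hj Hw]]; apply in_map_iff in Hw; destruct Hw as [w' [<- Hw']].
      apply IH in Hw'; apply in_seq in Hj; destruct Hw' as [H1 H2]; simpl.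
      split; [lia|]; intros j' [<-|H]; [lia|auto].
    + intros [H1 H2]; destruct w as [|j w']; [discriminate|].
      exists j; split.
      * apply in_seq; assert (j < K)%nat by (apply H2; simpl; auto); lia.
      * apply in_map, IH; simpl in H1; split; [lia|]; intros; apply H2; simpl; auto.
Qed.

Lemma length_all_seqs K m : length (all_seqs K m) = (K ^ m)%nat.
Proof.
  induction m as [|m IH]; simpl; auto.
  rewrite <- IH; generalize (all_seqs K m); intros A.
  replace (K * length A)%nat with (length (seq 0 K) * length A)%nat by now rewrite length_seq.
  generalize (seq 0 K); intros l.
  induction l as [|j l IHl]; cbn [flat_map length]; auto.
  rewrite length_app, length_map; unfold node in *; lia.
Qed.

Lemma all_seqs_nonempty K m : (0 < K)%nat -> In (repeat 0%nat m) (all_seqs K m).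
Proof.
  intros HK; apply in_all_seqs; split; [apply repeat_length|].
  intros j Hj; apply repeat_spec in Hj; lia.
Qed.

Lemma path_reward_app f zmax z a c :
  path_reward f zmax z (a ++ c)
  = path_reward f zmax z a + path_reward f zmax (state zmax z a) c.
Proof.
  revert z; induction a as [|j a IH]; intros z; unfold state; simpl.
  - lra.
  - rewrite IH; unfold state; lra.
Qed.

Lemma next_state_le zmax z j j' : (next_state zmax z j j' <= zmax)%nat.
Proof. unfold next_state; destruct (Nat.eqb j' j); lia. Qed.

Lemma state_le K zmax z i :
  (forall j, (j < K)%nat -> (z j <= zmax)%nat) ->
  forall j, (j < K)%nat -> (state zmax z i j <= zmax)%nat.
Proof.
  revert z; induction i as [|x i IH]; intros z Hz j Hj; unfold state; simpl; auto.
  apply IH; auto; intros; apply next_state_le.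
Qed.

Lemma v_le_vstar K zmax d f z w :
  In w (all_seqs K d) -> v K zmax d f z w <= vstar K zmax d f z.
Proof. intros H; apply Rmax_list_ge, in_map; auto. Qed.

Lemma v_full K zmax d f z w : length w = d -> v K zmax d f z w = u f zmax z w.
Proof. intros H; unfold v; rewrite H, Nat.sub_diag; simpl; lra. Qed.

Lemma b_full K zmax d f z w : length w = d -> b K zmax d f z w = u f zmax z w.
Proof. intros H; unfold b; rewrite H, Nat.sub_diag; simpl; lra. Qed.

Lemma vstar_attained K zmax d f z : (0 < K)%nat ->
  exists w, In w (all_seqs K d) /\ vstar K zmax d f z = u f zmax z w.
Proof.
  intros HK.
  assert (Hne : map (v K zmax d f z) (all_seqs K d) <> []).
  { pose proof (all_seqs_nonempty K d HK) as H.
    destruct (all_seqs K d); [destruct H|discriminate]. }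
  destruct (proj1 (in_map_iff _ _ _) (Rmax_list_in _ Hne)) as [w [Hw Hin]].
  exists w; split; auto.
  unfold vstar; rewrite <- Hw; apply v_full, (in_all_seqs K), Hin.
Qed.

Section Rewards.
Variables (K zmax : nat) (f : nat -> nat -> R).

Definition gmax (zs : nat -> nat) (m : nat) : R :=
  Rmax_list (map (fun j => g f zmax j (zs j) m) (seq 0 K)).

(* After t steps from [zs], arm j is either at its untouched state
   min(zs j + t, zmax) or was reset at most t steps ago; these are exactly the
   values over which [g] maximizes. *)
Lemma path_reward_le_gmax zs m : forall c w t,
  (forall j, In j c -> (j < K)%nat) -> (t + length c <= m)%nat ->
  (forall j, (j < K)%nat ->
     w j = Nat.min (zs j + t) zmax \/ exists k, (k <= t)%nat /\ w j = Nat.min k zmax) ->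
  path_reward f zmax w c <= INR (length c) * gmax zs m.
Proof.
  induction c as [|j c IH]; intros w t Hc Ht Hw; cbn [path_reward length].
  - simpl; lra.
  - assert (Hj : (j < K)%nat) by (apply Hc; simpl; auto).
    simpl in Ht.
    assert (Hf : f j (w j) <= g f zmax j (zs j) m).
    { apply Rmax_list_ge, in_or_app.
      destruct (Hw j Hj) as [E|[k [Hk E]]]; rewrite E.
      - left; apply (in_map (fun k => f j (Nat.min (zs j + k) zmax))), in_seq; lia.
      - right; apply (in_map (fun k => f j (Nat.min k zmax))), in_seq; lia. }
    assert (Hg : g f zmax j (zs j) m <= gmax zs m).
    { apply Rmax_list_ge, (in_map (fun j => g f zmax j (zs j) m)), in_seq; lia. }
    assert (Hrest : path_reward f zmax (next_state zmax w j) c <= INR (length c) * gmax zs m).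
    { apply (IH _ (S t)); [intros; apply Hc; simpl; auto|lia|].
      intros j' Hj'; unfold next_state; destruct (Nat.eqb j' j).
      - right; exists 0%nat; split; lia.
      - destruct (Hw j' Hj') as [E|[k [Hk E]]]; rewrite E.
        + left; lia.
        + right; exists (S k); split; lia. }
    rewrite S_INR; lra.
Qed.

Lemma path_reward_le_Psi zs c :
  (forall j, (j < K)%nat -> (zs j <= zmax)%nat) -> (forall j, In j c -> (j < K)%nat) ->
  path_reward f zmax zs c <= Psi K f zmax zs (length c).
Proof.
  intros Hz Hc; destruct c as [|j c']; [simpl; lra|].
  apply (path_reward_le_gmax zs _ _ zs 0); auto.
  intros j0 Hj0; left; specialize (Hz j0 Hj0); lia.
Qed.

Lemma u_le_b d z a c :
  (forall j, (j < K)%nat -> (z j <= zmax)%nat) -> (forall j, In j c -> (j < K)%nat) ->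
  (length a + length c = d)%nat ->
  u f zmax z (a ++ c) <= b K zmax d f z a.
Proof.
  intros Hz Hc Hl; unfold u, b; rewrite path_reward_app.
  replace (d - length a)%nat with (length c) by lia.
  apply Rplus_le_compat_l, path_reward_le_Psi; auto; apply state_le; auto.
Qed.

Lemma in_all_values j x :
  (j < K)%nat -> (x <= zmax)%nat -> In (f j x) (all_values K zmax f).
Proof.
  intros Hj Hx; apply in_flat_map; exists j; split; [|apply in_map]; apply in_seq; lia.
Qed.

Lemma path_reward_ge c w :
  (forall j, In j c -> (j < K)%nat) -> (forall j, (j < K)%nat -> (w j <= zmax)%nat) ->
  INR (length c) * Rmin_list (all_values K zmax f) <= path_reward f zmax w c.
Proof.
  revert w; induction c as [|j c IH]; intros w Hc Hw; cbn [path_reward length].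
  - simpl; lra.
  - assert (Rmin_list (all_values K zmax f) <= f j (w j)).
    { apply Rmin_list_le, in_all_values; apply Hc || apply Hw, Hc; simpl; auto. }
    assert (INR (length c) * Rmin_list (all_values K zmax f)
            <= path_reward f zmax (next_state zmax w j) c).
    { apply IH; [intros; apply Hc; simpl; auto|intros; apply next_state_le]. }
    rewrite S_INR; lra.
Qed.

Hypothesis HK0 : (0 < K)%nat.

Lemma Rmin_le_Rmax_values :
  Rmin_list (all_values K zmax f) <= Rmax_list (all_values K zmax f).
Proof.
  apply Rle_trans with (f 0%nat 0%nat).
  - apply Rmin_list_le, in_all_values; lia.
  - apply Rmax_list_ge, in_all_values; lia.
Qed.

Lemma Delta_f_ge0 : 0 <= Delta_f K zmax f.
Proof.
  unfold Delta_f; pose proof Rmin_le_Rmax_values.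
  pose proof (Rmin_l (Rmin_list (all_values K zmax f)) 0); lra.
Qed.

Lemma Psi_le_max zs m :
  Psi K f zmax zs m <= INR m * Rmax_list (all_values K zmax f).
Proof.
  destruct m as [|m']; [simpl; lra|].
  apply Rmult_le_compat_l; [apply pos_INR|].
  apply Rmax_list_le; [destruct K; [lia|discriminate]|].
  intros x Hx; apply in_map_iff in Hx; destruct Hx as [j [<- Hj]]; apply in_seq in Hj.
  apply Rmax_list_le; [discriminate|].
  intros y Hy; apply in_app_or in Hy.
  destruct Hy as [Hy|Hy]; apply in_map_iff in Hy; destruct Hy as [k [<- _]];
    apply Rmax_list_ge, in_all_values; lia.
Qed.

Lemma b_sub_v_le d z i :
  (forall j, (j < K)%nat -> (z j <= zmax)%nat) ->
  b K zmax d f z i - v K zmax d f z i <= INR (d - length i) * Delta_f K zmax f.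
Proof.
  intros Hz; unfold b, v.
  set (m := (d - length i)%nat); set (zs := state zmax z i).
  set (M := Rmax_list (all_values K zmax f)); set (mn := Rmin_list (all_values K zmax f)).
  assert (HPsi : Psi K f zmax zs m <= INR m * M) by apply Psi_le_max.
  assert (Hbest : INR m * mn
                  <= Rmax_list (map (fun c => path_reward f zmax zs c) (all_seqs K m))).
  { apply Rle_trans with (path_reward f zmax zs (repeat 0%nat m)).
    - rewrite <- (repeat_length 0%nat m) at 1.
      apply path_reward_ge; [|apply state_le; auto].
      intros j Hj; apply repeat_spec in Hj; lia.
    - apply Rmax_list_ge, (in_map (fun c => path_reward f zmax zs c)), all_seqs_nonempty, HK0. }
  assert (HD : M - mn <= Delta_f K zmax f).
  { unfold Delta_f; fold M mn; pose proof (Rmin_l mn 0); lra. }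
  assert (INR m * (M - mn) <= INR m * Delta_f K zmax f)
    by (apply Rmult_le_compat_l; [apply pos_INR|auto]).
  lra.
Qed.

End Rewards.

Lemma in_Tset sel n x : In x (Tset sel n) <-> exists k, (k < n)%nat /\ sel k = x.
Proof.
  unfold Tset; rewrite in_map_iff; split.
  - intros [k [H1 H2]]; apply in_seq in H2; exists k; split; [lia|auto].
  - intros [k [H1 H2]]; exists k; split; [auto|apply in_seq; lia].
Qed.

Lemma Tset_S sel n y : In y (Tset sel n) -> In y (Tset sel (S n)).
Proof.
  rewrite !in_Tset; intros [k [Hk E]]; exists k; split; [lia|auto].
Qed.

Lemma node_eqb_true i j : node_eqb i j = true <-> i = j.
Proof. unfold node_eqb; destruct (list_eq_dec Nat.eq_dec i j); split; congruence. Qed.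

Lemma prefix_of_snoc (a p c : node) j : a ++ [j] = p ++ c -> c <> [] ->
  p = a \/ exists c', a = p ++ c' /\ c' <> [].
Proof.
  intros E Hc; destruct (exists_last Hc) as [c0 [y ->]].
  rewrite app_assoc in E; apply app_inj_tail in E; destruct E as [E _].
  destruct c0 as [|x c0].
  - left; rewrite app_nil_r in E; auto.
  - right; exists (x :: c0); split; [auto|discriminate].
Qed.

Section Frontier.
Variables (K : nat) (sel : nat -> node).

Definition selected_in_frontier (n : nat) : Prop :=
  forall k, (k < n)%nat -> In (sel k) (Sset K sel k).

Lemma Sset_arms n : selected_in_frontier n ->
  forall x, In x (Sset K sel n) -> forall j, In j x -> (j < K)%nat.
Proof.
  induction n as [|n IH]; intros Hs x Hx j Hj; simpl in Hx.
  - destruct Hx as [<-|[]]; destruct Hj.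
  - assert (IH' := IH (fun k Hk => Hs k ltac:(lia))).
    apply in_app_or in Hx; destruct Hx as [Hx|Hx].
    + apply filter_In in Hx; eapply IH'; [apply Hx|auto].
    + apply in_map_iff in Hx; destruct Hx as [j' [<- Hj']].
      apply in_app_or in Hj; destruct Hj as [Hj|[<-|[]]].
      * eapply IH'; [apply Hs|]; eauto.
      * apply in_seq in Hj'; lia.
Qed.

Lemma Sset_covers d n :
  (forall k, (k < n)%nat -> In (sel k) (Sset K sel k) /\ (length (sel k) < d)%nat) ->
  forall w, length w = d -> (forall j, In j w -> (j < K)%nat) ->
  exists a c, w = a ++ c /\ In a (Sset K sel n).
Proof.
  induction n as [|n IH]; intros Hs w Hl Hw.
  - exists [], w; simpl; auto.
  - destruct (IH (fun k Hk => Hs k ltac:(lia)) w Hl Hw) as [a [c [E Ha]]].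
    destruct (node_eqb a (sel n)) eqn:Eq.
    + apply node_eqb_true in Eq; subst a.
      destruct c as [|j c'].
      * exfalso; rewrite app_nil_r in E; subst w; destruct (Hs n); lia.
      * exists (sel n ++ [j]), c'; split; [rewrite <- app_assoc; auto|].
        simpl; apply in_or_app; right.
        apply (in_map (fun j0 => sel n ++ [j0])), in_seq.
        assert (j < K)%nat by (apply Hw; rewrite E; apply in_or_app; simpl; auto); lia.
    + exists a, c; split; auto.
      simpl; apply in_or_app; left; apply filter_In; rewrite Eq; auto.
Qed.

Definition tree_invariant n :=
  (forall x, In x (Sset K sel n) -> ~ In x (Tset sel n) /\
     forall p c, x = p ++ c -> c <> [] -> In p (Tset sel n)) /\
  (forall k, (k < n)%nat -> forall p c, sel k = p ++ c -> c <> [] -> In p (Tset sel k)).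

Lemma tree_invariant_holds n : selected_in_frontier n -> tree_invariant n.
Proof.
  induction n as [|n IH]; intros Hs.
  - split; [|intros; lia].
    intros x [<-|[]]; split; [simpl; auto|].
    intros p c E Hc; destruct p, c; simpl in E; congruence.
  - destruct IH as [J1 J2]; [intros k Hk; apply Hs; lia|].
    assert (Hn : In (sel n) (Sset K sel n)) by auto.
    split.
    + intros x Hx; simpl in Hx; apply in_app_or in Hx; destruct Hx as [Hx|Hx].
      * apply filter_In in Hx; destruct Hx as [Hx Hne].
        assert (x <> sel n) by (intros E; apply node_eqb_true in E; rewrite E in Hne; discriminate).
        destruct (J1 x Hx) as [N1 N2]; split.
        -- rewrite in_Tset; intros [k [Hk E]].
           destruct (Nat.eq_dec k n); [subst; auto|].
           apply N1, in_Tset; exists k; split; [lia|auto].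
        -- intros p c E Hc; apply Tset_S; eauto.
      * apply in_map_iff in Hx; destruct Hx as [j [<- _]].
        destruct (J1 _ Hn) as [N1 N2]; split.
        -- rewrite in_Tset; intros [k [Hk E]].
           destruct (Nat.eq_dec k n) as [->|Hkn].
           ++ apply (f_equal (@length nat)) in E; rewrite length_app in E; simpl in E; lia.
           ++ assert (Hp : In (sel n) (Tset sel k))
                by (apply (J2 k ltac:(lia) (sel n) [j]); [exact E|discriminate]).
              apply N1; apply in_Tset in Hp; destruct Hp as [k' [? ?]].
              apply in_Tset; exists k'; split; [lia|auto].
        -- intros p c E Hc; destruct (prefix_of_snoc _ _ _ _ E Hc) as [->|[c' [E' Hc']]].
           ++ apply in_Tset; exists n; split; auto.
           ++ apply Tset_S; eauto.
    + intros k Hk p c E Hc; destruct (Nat.eq_dec k n) as [->|].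
      * destruct (J1 _ Hn) as [_ N2]; eauto.
      * apply (J2 k ltac:(lia) p c); auto.
Qed.

Lemma Tset_NoDup n : selected_in_frontier n -> NoDup (Tset sel n).
Proof.
  intros Hs; apply NoDup_map_NoDup_ForallPairs; [|apply seq_NoDup].
  assert (Hfresh : forall k k', (k < k' < n)%nat -> sel k <> sel k').
  { intros k k' Hk E.
    destruct (tree_invariant_holds k') as [J1 _]; [intros i Hi; apply Hs; lia|].
    apply (proj1 (J1 (sel k') (Hs k' ltac:(lia)))), in_Tset; exists k; split; [lia|auto]. }
  intros k k' Hk Hk' E; apply in_seq in Hk, Hk'.
  destruct (Nat.lt_total k k') as [H|[H|H]]; auto; exfalso.
  - apply (Hfresh k k'); [lia|auto].
  - apply (Hfresh k' k); [lia|auto].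
Qed.

End Frontier.

Definition depth_count (L : list node) (l : nat) : nat :=
  length (filter (fun x => Nat.eqb (length x) l) L).

Lemma depth_count_le (L P : list node) l : NoDup L ->
  (forall x, In x L -> length x = l -> In x P) -> (depth_count L l <= length P)%nat.
Proof.
  intros HL HP; apply NoDup_incl_length; [apply NoDup_filter, HL|].
  intros x Hx; apply filter_In in Hx; destruct Hx as [Hx Hl].
  apply HP; [auto|apply Nat.eqb_eq, Hl].
Qed.

Lemma sum_indicator a D : (a <= D)%nat ->
  sum_f_R0 (fun l => if Nat.eqb a l then 1 else 0) D = 1.
Proof.
  induction D as [|D IH]; intros H.
  - replace a with 0%nat by lia; reflexivity.
  - simpl; destruct (Nat.eq_dec a (S D)) as [->|].
    + rewrite Nat.eqb_refl, (sum_eq _ (fun _ => 0)), sum_cte; [lra|].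
      intros i Hi; destruct (Nat.eqb_spec (S D) i); [lia|auto].
    + rewrite IH by lia; destruct (Nat.eqb_spec a (S D)); [lia|lra].
Qed.

Lemma length_eq_sum_depth_count (L : list node) D :
  (forall x, In x L -> (length x <= D)%nat) ->
  INR (length L) = sum_f_R0 (fun l => INR (depth_count L l)) D.
Proof.
  unfold depth_count; induction L as [|x L IH]; intros H.
  - simpl; rewrite sum_cte; lra.
  - rewrite (sum_eq _ (fun l => INR (length (filter (fun x => Nat.eqb (length x) l) L)) +
                                (if Nat.eqb (length x) l then 1 else 0))).
    + rewrite sum_plus, <- IH, sum_indicator; [rewrite length_cons, S_INR; auto| |];
        intros; apply H; simpl; auto.
    + intros i _; cbn [filter]; destruct (Nat.eqb (length x) i); cbn [length];
        try rewrite S_INR; lra.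
Qed.

Lemma sum_f_R0_mono (F : nat -> R) a b' : (forall l, 0 <= F l) -> (a <= b')%nat ->
  sum_f_R0 F a <= sum_f_R0 F b'.
Proof.
  intros HF; induction b' as [|b' IH]; intros H.
  - replace a with 0%nat by lia; lra.
  - destruct (Nat.eq_dec a (S b')) as [->|]; [lra|].
    simpl; specialize (IH ltac:(lia)); specialize (HF (S b')); lra.
Qed.

Lemma sum_truncated_le (F : nat -> R) d0 D : (forall l, 0 <= F l) ->
  sum_f_R0 (fun l => if Nat.leb l d0 then F l else 0) D <= sum_f_R0 F d0.
Proof.
  intros HF.
  assert (Hlow : forall D', (D' <= d0)%nat ->
            sum_f_R0 (fun l => if Nat.leb l d0 then F l else 0) D' = sum_f_R0 F D').
  { intros D' HD'; apply sum_eq; intros i Hi; destruct (Nat.leb_spec i d0); [auto|lia]. }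
  destruct (Nat.le_gt_cases D d0) as [H|H].
  - rewrite Hlow by auto; apply sum_f_R0_mono; auto.
  - replace D with (d0 + (D - d0))%nat by lia.
    induction (D - d0)%nat as [|e IH].
    + rewrite Nat.add_0_r, Hlow by lia; lra.
    + rewrite Nat.add_succ_r; cbn [sum_f_R0].
      destruct (Nat.leb_spec (S (d0 + e)) d0); [lia|lra].
Qed.

Lemma dN_ge sel N k : (k < N)%nat -> (length (sel k) <= dN sel N)%nat.
Proof.
  intros Hk; unfold dN.
  assert (Hin : In (length (sel k)) (map (fun k => length (sel k)) (seq 0 N)))
    by (apply (in_map (fun k => length (sel k))), in_seq; lia).
  revert Hin; generalize (map (fun k => length (sel k)) (seq 0 N)); intros l.
  induction l as [|x l IH]; simpl; [tauto|]; intros [H|H]; [lia|specialize (IH H); lia].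
Qed.

Lemma dN_le sel N m : (forall k, (k < N)%nat -> (length (sel k) <= m)%nat) ->
  (dN sel N <= m)%nat.
Proof.
  intros H; unfold dN.
  assert (Hl : forall x, In x (map (fun k => length (sel k)) (seq 0 N)) -> (x <= m)%nat).
  { intros x Hx; apply in_map_iff in Hx; destruct Hx as [k [<- Hk]]; apply in_seq in Hk.
    apply H; lia. }
  revert Hl; generalize (map (fun k => length (sel k)) (seq 0 N)); intros l.
  induction l as [|x l IH]; simpl; intros Hl; [lia|].
  pose proof (Hl x (or_introl eq_refl)); specialize (IH (fun y Hy => Hl y (or_intror Hy))); lia.
Qed.

Lemma ln_geometric_sum_bound q D X : 1 < q -> 0 < X ->
  X <= sum_f_R0 (fun l => q ^ l) D ->
  ln X / ln q + ln (q - 1) / ln q < INR D + 1.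
Proof.
  intros Hq HX HXs.
  assert (Hgeo : sum_f_R0 (fun l => q ^ l) D * (q - 1) = q ^ (D + 1) - 1) by apply GP_finite.
  assert (HXq : X * (q - 1) < q ^ (D + 1)).
  { assert (X * (q - 1) <= sum_f_R0 (fun l => q ^ l) D * (q - 1))
      by (apply Rmult_le_compat_r; lra).
    lra. }
  assert (Hln : ln X + ln (q - 1) < INR (D + 1) * ln q).
  { rewrite <- ln_mult, <- ln_pow by lra; apply ln_increasing; [nra|auto]. }
  assert (Hlq : 0 < ln q) by (rewrite <- ln_1; apply ln_increasing; lra).
  rewrite plus_INR in Hln; simpl INR in Hln.
  apply Rmult_lt_reg_r with (ln q); auto.
  replace ((ln X / ln q + ln (q - 1) / ln q) * ln q) with (ln X + ln (q - 1))
    by (field; lra).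
  lra.
Qed.

Section Planning.
Variables (K zmax d : nat) (f : nat -> nat -> R) (z : nat -> nat).
Hypothesis HK0 : (0 < K)%nat.
Hypothesis Hz : forall j, (j < K)%nat -> (z j <= zmax)%nat.

Definition expands_before (sel : nat -> node) (n : nat) : Prop :=
  forall k, (k < n)%nat -> selects_argmax K zmax d f z sel k /\ (length (sel k) < d)%nat.

Lemma expands_before_frontier sel n : expands_before sel n -> selected_in_frontier K sel n.
Proof. intros H k Hk; apply H, Hk. Qed.

Lemma vstar_le_b_selected sel n : expands_before sel n ->
  selects_argmax K zmax d f z sel n -> vstar K zmax d f z <= b K zmax d f z (sel n).
Proof.
  intros Hk [_ Hmax].
  destruct (vstar_attained K zmax d f z HK0) as [w [Hw ->]].
  apply in_all_seqs in Hw; destruct Hw as [Hl Hw].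
  destruct (Sset_covers K sel d n) with (w := w) as [a [c [-> Ha]]]; auto.
  { intros k Hk'; destruct (Hk k Hk') as [[H1 _] H2]; auto. }
  apply Rle_trans with (b K zmax d f z a); [|apply Hmax, Ha].
  apply u_le_b; auto.
  - intros j Hj; apply Hw, in_or_app; auto.
  - rewrite <- Hl, length_app; reflexivity.
Qed.

Lemma stopped_node_optimal sel n : expands_before sel n ->
  selects_argmax K zmax d f z sel n -> length (sel n) = d ->
  vstar K zmax d f z - v K zmax d f z (sel n) = 0.
Proof.
  intros Hk Hsel Hlen.
  assert (Hb := vstar_le_b_selected sel n Hk Hsel).
  assert (Hv : v K zmax d f z (sel n) <= vstar K zmax d f z).
  { apply v_le_vstar, in_all_seqs; split; auto.
    apply (Sset_arms K sel n (expands_before_frontier sel n Hk)), Hsel. }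
  rewrite b_full in Hb by auto; rewrite v_full in * by auto; lra.
Qed.

Section Expanded.
Variables (sel : nat -> node) (N : nat).
Hypothesis Hexp : expands_before sel N.

Lemma expanded_arms x : In x (Tset sel N) -> forall j, In j x -> (j < K)%nat.
Proof.
  intros Hx; apply in_Tset in Hx; destruct Hx as [k [Hk <-]].
  apply (Sset_arms K sel k); [intros i Hi; apply Hexp; lia|apply Hexp, Hk].
Qed.

Lemma expanded_gap_le x : In x (Tset sel N) ->
  vstar K zmax d f z - v K zmax d f z x <= INR (d - length x) * Delta_f K zmax f.
Proof.
  intros Hx; apply in_Tset in Hx; destruct Hx as [k [Hk <-]].
  pose proof (vstar_le_b_selected sel k (fun i Hi => Hexp i ltac:(lia)) (proj1 (Hexp k Hk))).
  pose proof (b_sub_v_le K zmax f HK0 d z (sel k) Hz); lra.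
Qed.

Lemma expanded_depth_count_le_pow l :
  INR (depth_count (Tset sel N) l) <= INR K ^ l.
Proof.
  rewrite <- pow_INR, <- length_all_seqs; apply le_INR, depth_count_le.
  - apply (Tset_NoDup K), expands_before_frontier, Hexp.
  - intros x Hx Hl; apply in_all_seqs; split; [auto|apply expanded_arms, Hx].
Qed.

Lemma expanded_depth_count_le_prop_opt l :
  INR (depth_count (Tset sel N) l)
  <= prop_opt K zmax d f z l (INR (d - l) * Delta_f K zmax f) * INR K ^ l.
Proof.
  assert (HKl : 0 < INR (K ^ l)) by (apply lt_0_INR, Nat.neq_0_lt_0, Nat.pow_nonzero; lia).
  unfold prop_opt; rewrite <- pow_INR; unfold Rdiv; rewrite Rmult_assoc, Rinv_l, Rmult_1_r by lra.
  apply le_INR, depth_count_le.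
  - apply (Tset_NoDup K), expands_before_frontier, Hexp.
  - intros x Hx Hl; apply filter_In; split.
    + apply in_all_seqs; split; [auto|apply expanded_arms, Hx].
    + destruct (Rle_dec _ _) as [_|Hn]; [auto|].
      exfalso; apply Hn; rewrite <- Hl; apply expanded_gap_le, Hx.
Qed.

Lemma expanded_depth_count_le lambda d0 l :
  (forall l', (d0 <= l' <= d)%nat ->
     prop_opt K zmax d f z l' (INR (d - l') * Delta_f K zmax f) <= lambda ^ l') ->
  0 <= lambda -> (l <= d)%nat ->
  INR (depth_count (Tset sel N) l)
  <= (if Nat.leb l d0 then INR K ^ l else 0) + (lambda * INR K) ^ l.
Proof.
  intros Hprop Hlam Hld.
  assert (Hq : 0 <= (lambda * INR K) ^ l) by (apply pow_le, Rmult_le_pos; [auto|apply pos_INR]).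
  destruct (Nat.leb_spec l d0).
  - pose proof (expanded_depth_count_le_pow l); lra.
  - rewrite Rplus_0_l, Rpow_mult_distr.
    eapply Rle_trans; [apply expanded_depth_count_le_prop_opt|].
    apply Rmult_le_compat_r; [apply pow_le, pos_INR|apply Hprop; lia].
Qed.

Lemma expanded_count_bound lambda d0 :
  (forall l, (d0 <= l <= d)%nat ->
     prop_opt K zmax d f z l (INR (d - l) * Delta_f K zmax f) <= lambda ^ l) ->
  0 <= lambda ->
  INR N - sum_f_R0 (fun l => INR K ^ l) d0
  <= sum_f_R0 (fun l => (lambda * INR K) ^ l) (dN sel N).
Proof.
  intros Hprop Hlam.
  assert (HdN : (dN sel N <= d)%nat)
    by (apply dN_le; intros k Hk; pose proof (proj2 (Hexp k Hk)); lia).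
  replace N with (length (Tset sel N)) at 1 by (unfold Tset; rewrite length_map, length_seq; auto).
  rewrite (length_eq_sum_depth_count _ (dN sel N)).
  - enough (sum_f_R0 (fun l => INR (depth_count (Tset sel N) l)) (dN sel N)
            <= sum_f_R0 (fun l => INR K ^ l) d0
               + sum_f_R0 (fun l => (lambda * INR K) ^ l) (dN sel N)) by lra.
    eapply Rle_trans; [apply sum_Rle; intros l Hl; apply (expanded_depth_count_le lambda d0); auto; lia|].
    rewrite sum_plus; apply Rplus_le_compat_r, sum_truncated_le.
    intros l; apply pow_le, pos_INR.
  - intros x Hx; apply in_Tset in Hx; destruct Hx as [k [Hk <-]]; apply dN_ge, Hk.
Qed.

End Expanded.
End Planning.

Theorem proposition2
  (K zmax d : nat) (z : nat -> nat) (f : nat -> nat -> R) (N : nat)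
  (HK : (2 <= K)%nat) (Hd : (1 <= d)%nat)
  (Hz : forall j, (j < K)%nat -> (z j <= zmax)%nat) :
  (forall (sel : nat -> node) (n : nat),
     (n < N)%nat ->
     (forall k, (k < n)%nat ->
        selects_argmax K zmax d f z sel k /\ (length (sel k) < d)%nat) ->
     selects_argmax K zmax d f z sel n ->
     length (sel n) = d ->
     vstar K zmax d f z - v K zmax d f z (sel n) = 0)
  /\
  (forall (sel : nat -> node) (lambda : R) (d0 : nat) (iN : node),
     1 / INR K < lambda <= 1 ->
     (1 <= d0 <= d)%nat ->
     (forall l, (d0 <= l <= d)%nat ->
        prop_opt K zmax d f z l (INR (d - l)%nat * Delta_f K zmax f) <= lambda ^ l) ->
     INR N > (INR K ^ (d0 + 1) - 1) / (INR K - 1) ->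
     (forall k, (k < N)%nat ->
        selects_argmax K zmax d f z sel k /\ (length (sel k) < d)%nat) ->
     In iN (Tset sel N) ->
     length iN = dN sel N ->
     (forall j, In j (Tset sel N) -> length j = dN sel N ->
        b K zmax d f z j <= b K zmax d f z iN) ->
     let n0 := (INR K ^ (d0 + 1) - 1) / (INR K - 1) in
     vstar K zmax d f z - v K zmax d f z iN <=
       (INR d - ln (INR N - n0) / ln (lambda * INR K)
              - ln (lambda * INR K - 1) / ln (lambda * INR K) + 1)
       * Delta_f K zmax f).
Proof.
  assert (HK0 : (0 < K)%nat) by lia.
  split; [intros sel n _; apply (stopped_node_optimal K zmax d f z HK0 Hz)|].
  intros sel lambda d0 iN Hlam Hd0 Hprop HN Hexp HiN HlenN _ n0.
  assert (HKR : 2 <= INR K) by (apply (le_INR 2); auto).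
  assert (Hq : 1 < lambda * INR K).
  { destruct Hlam as [Hlam _]; unfold Rdiv in Hlam; rewrite Rmult_1_l in Hlam.
    apply Rmult_lt_compat_r with (r := INR K) in Hlam; [|lra].
    rewrite Rinv_l in Hlam; lra. }
  assert (Hn0 : sum_f_R0 (fun l => INR K ^ l) d0 = n0).
  { unfold n0; rewrite <- GP_finite; field; lra. }
  assert (Hlam0 : 0 <= lambda) by (apply Rmult_le_reg_r with (INR K); lra).
  assert (Hcount := expanded_count_bound K zmax d f z HK0 Hz sel N Hexp lambda d0 Hprop Hlam0).
  assert (Hlog := ln_geometric_sum_bound _ (dN sel N) (INR N - n0) Hq
                    ltac:(fold n0 in HN; lra) ltac:(lra)).
  assert (HdN : (dN sel N <= d)%nat).
  { apply in_Tset in HiN; destruct HiN as [k [Hk <-]].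
    pose proof (proj2 (Hexp k Hk)); lia. }
  eapply Rle_trans; [apply (expanded_gap_le K zmax d f z HK0 Hz sel N Hexp), HiN|].
  rewrite HlenN, minus_INR by auto.
  apply Rmult_le_compat_r; [apply Delta_f_ge0, HK0|lra].
Qed.
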